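(* Consider a multilayer network with $M$ layers, where layer $h\in\{1,\dots,M\}$ has $N_h$ nodes, node set $V=\{(i,h): h=1,\dots,M,\ i=1,\dots,N_h\}$, and nonnegative weights $w_{ij}(hk)$ between node $i$ of layer $h$ and node $j$ of layer $k$. Assume the network is weighted, undirected and connected, so that the multilayer Laplacian $\mathcal{L}$ (defined in the context) is symmetric: $\mathcal{L}_{(i,h),(j,k)}=\mathcal{L}_{(j,k),(i,h)}$. Let each $f_{ih}:\mathbb{R}\to\mathbb{R}$, $(i,h)\in V$, be convex (and differentiable with Lipschitz continuous derivative), let $\tilde f(Y)=\sum_{(i,h)\in V} f_{ih}(y_{ih})$ for $Y=(y_{ih})\in\mathbb{R}^V$, and consider the augmented Lagrangian $$\mathcal{L}_m(Y,\Lambda)=\tilde f(Y)+\langle \Lambda,\mathcal{L}Y\rangle+\tfrac12\langle Y,\mathcal{L}Y\rangle,\qquad Y,\Lambda\in\mathbb{R}^V,$$ associated with the problem $\min_{Y}\tilde f(Y)$ subject to $\mathcal{L}Y=0$. Let $U\in\mathbb{R}^V$ be the all-ones tensor. Then: (1) If $(Y^\star,\Lambda^\star)$ is a saddle point of $\mathcal{L}_m$ (i.e. a solution of $\min_Y\max_\Lambda\mathcal{L}_m$), then $(Y^\star,\Lambda^\star+\gamma U)$ is also a saddle (minimax) point for every $\gamma\in\mathbb{R}$. (2) If $(Y^\star,\Lambda^\star)$ is a saddle point of $\mathcal{L}_m$, then $Y^\star=x^\star U$ for some $x^\star\in\mathbb{R}$, and $x^\star$ solves the primal problem $\min_{x\in\mathbb{R}}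 \sum_{(i,h)\in V} f_{ih}(x)$. (3) There exists a saddle point $(Y^\star,\Lambda^\star)$ of $\mathcal{L}_m$ satisfying $\mathcal{L}\Lambda^\star+\nabla\tilde f(Y^\star)=0$.
   Context: For $T\in\mathbb{R}^V$, $(\mathcal{L}T)_{ih}=\sum_{k=1}^M\sum_{j=1}^{N_k} l_{ij}(hk)\,t_{jk}$, where $l_{ij}(hk)=\Big[\sum_{n=1}^M\sum_{m=1}^{N_n} w_{mi}(nh)\Big]\delta_{ij}\delta_{hk}-w_{ij}(hk)$ (the multilayer combinatorial Laplacian tensor; $\delta$ is the Kronecker delta, and $w_{ij}(hh)$ are intralayer weights, $w_{ij}(hk)$ for $h\ne k$ interlayer weights). Undirected means $w_{ij}(hk)=w_{ji}(kh)$; connected means the graph on $V$ with an edge between $(i,h)$ and $(j,k)$ whenever $w_{ij}(hk)>0$ is connected. $\langle A,B\rangle=\sum_{(i,h)\in V}a_{ih}b_{ih}$. $\nabla\tilde f(Y)$ has components $f_{ih}'(y_{ih})$. *)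

From HB Require Import structures.
From mathcomp Require Import all_boot all_order all_algebra.
From mathcomp Require Import all_classical all_reals all_analysis.
Set Implicit Arguments. Unset Strict Implicit. Unset Printing Implicit Defensive.
Import Order.TTheory GRing.Theory Num.Theory.
Local Open Scope ring_scope.

Section Multilayer.
Variables (R : realType) (M : nat) (N : 'I_M -> nat).

(* node (i,h) of layer h is encoded as Tagged h i, i : 'I_(N h) *)
Definition node : finType := {h : 'I_M & 'I_(N h)}.

Variable w : node -> node -> R.

Definition lap_entry (a b : node) : R :=
  (\sum_(c : node) w c a) * (a == b)%:R - w a b.

Definition mlap (T : node -> R) : node -> R :=
  fun a => \sum_(b : node) lap_entry a b * T b.

Definition inner (A B : node -> R) : R := \sum_(a : node) A a * B a.

Definition all_ones : node -> R := fun _ => 1.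

Definition undirected : Prop := forall a b, w a b = w b a.

Definition connected_net : Prop :=
  forall a b, connect [rel x y : node | 0 < w x y] a b.

Variable f : node -> R -> R.

Definition ftilde (Y : node -> R) : R := \sum_(a : node) f a (Y a).

Definition aug_lag (Y Lam : node -> R) : R :=
  ftilde Y + inner Lam (mlap Y) + 2^-1 * inner Y (mlap Y).

Definition saddle (Y Lam : node -> R) : Prop :=
  (forall Lam', aug_lag Y Lam' <= aug_lag Y Lam) /\
  (forall Y', aug_lag Y Lam <= aug_lag Y' Lam).

Definition grad_ftilde (Y : node -> R) : node -> R :=
  fun a => derive1 (f a) (Y a).

End Multilayer.

Definition convex_fun {R : realType} (g : R -> R) : Prop :=
  forall x y t : R, 0 <= t -> t <= 1 ->
    g (t * x + (1 - t) * y) <= t * g x + (1 - t) * g y.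

Definition diff_lipschitz_deriv {R : realType} (g : R -> R) : Prop :=
  (forall x : R, derivable g x 1) /\
  exists L : R, forall x y : R, `|derive1 g x - derive1 g y| <= L * `|x - y|.

From HB Require Import structures.
From mathcomp Require Import all_boot all_order all_algebra.
From mathcomp Require Import all_classical all_reals all_analysis.
From mathcomp Require Import ring lra.
Import Order.TTheory GRing.Theory Num.Theory.
Local Open Scope ring_scope.
Import numFieldNormedType.Exports.
Set Implicit Arguments. Unset Strict Implicit. Unset Printing Implicit Defensive.

(* The columns of L sum to zero, so <U, L Y> = 0 and shifting Lambda by gamma U
   leaves L_m unchanged.  At a saddle point, maximality in Lambda (tested at
   Lambda + L Y) forces L Y = 0; as 2 <Y, L Y> = sum_ab w_ab (y_a - y_b)^2 and
   the network is connected, ker L consists of the constants, and minimality in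
   Y over the constants makes x* optimal.  Conversely, at a minimiser x0 Fermat's
   rule gives sum_a f_a'(x0) = 0, i.e. -grad f(x0 U) is orthogonal to
   ker L = span U, hence lies in the range of the symmetric L; the resulting
   pair (x0 U, Lambda) is a saddle point by the tangent inequalities of the
   convex f_a and the positivity of <Y, L Y>. *)

Section RealFunctions.
Variable R : realType.

Lemma derive_dirE (f : R -> R) (x v : R) :
  derivable f x 1 -> 'D_v f x = derive1 f x * v.
Proof.
move=> /derivable1_diffP dfx; rewrite derive1E !deriveE //.
by rewrite -[in LHS](mulr1 v) -[v * 1]/(v *: 1) linearZ /= mulrC.
Qed.

Lemma convex_fun_tangent (f : R -> R) (x y : R) :
  convex_fun f -> derivable f x 1 -> f x + derive1 f x * (y - x) <= f y.
Proof.
move=> f_cvx dfx; rewrite -derive_dirE // addrC -lerBrDr.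
have dfv : derivable f x (y - x) by apply/diff_derivable/derivable1_diffP.
have q_right := cvg_dnbhs_at_right dfv.
rewrite /derive -(cvg_lim _ q_right) //; apply: limr_le; first exact: cvgP q_right.
near=> h.
have h_gt0 : 0 < h by near: h; exact: nbhs_right_gt.
have h_le1 : h <= 1 by near: h; exact: nbhs_right_le.
rewrite /= ler_pdivrMl // lerBlDr.
have -> : h * (f y - f x) + f x = h * f y + (1 - h) * f x by ring.
have -> : h *: (y - x) + x = h * y + (1 - h) * x by rewrite /GRing.scale /=; ring.
exact: f_cvx (ltW h_gt0) h_le1.
Unshelve. all: by end_near. Qed.

Lemma is_derive_sum_fun (I : finType) (h : I -> R -> R) (dh : I -> R) (x : R) :
  (forall i, is_derive x 1 (h i) (dh i)) ->
  is_derive x 1 (\sum_i h i) (\sum_i dh i).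
Proof.
move=> hdh; elim/big_ind2: _ => [|? ? ? ? ? ?|i _]; last exact: hdh.
- exact: is_derive_cst.
- exact: is_deriveD.
Qed.

Lemma sum_derive1_at_min (I : finType) (f : I -> R -> R) (x0 : R) :
  (forall i x, derivable (f i) x 1) ->
  (forall x, \sum_i f i x0 <= \sum_i f i x) -> \sum_i derive1 (f i) x0 = 0.
Proof.
move=> df x0_min.
have dsum (x : R) : is_derive x 1 (\sum_i f i) (\sum_i 'D_1 (f i) x).
  by apply: is_derive_sum_fun => i; exact: derivableP.
have : is_derive x0 1 (\sum_i f i) 0.
  apply: (@derive1_at_min _ _ (x0 - 1) (x0 + 1)).
  - lra.
  - by move=> t _; have [] := dsum t.
  - by rewrite in_itv /=; apply/andP; split; lra.
  - by move=> t _; rewrite !fct_sumE; exact: x0_min.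
move=> d0; rewrite -[RHS](@derive_val _ _ _ _ _ _ _ d0).
rewrite (@derive_val _ _ _ _ _ _ _ (dsum x0)).
by apply: eq_bigr => i _; rewrite derive1E.
Qed.

End RealFunctions.

Section Laplacian.
Variables (R : realType) (M : nat) (N : 'I_M -> nat) (w : node N -> node N -> R).

Lemma sum_lap_entry_col b : \sum_a lap_entry w a b = 0.
Proof.
rewrite /lap_entry sumrB; apply/eqP; rewrite subr_eq0; apply/eqP.
rewrite (bigD1 b) //= eqxx mulr1 [X in _ + X]big1 ?addr0 //.
by move=> a /negbTE ->; rewrite mulr0.
Qed.

Lemma sum_mlap T : \sum_a mlap w T a = 0.
Proof.
rewrite /mlap exchange_big /= big1 // => b _.
by rewrite -mulr_suml sum_lap_entry_col mul0r.
Qed.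

Hypothesis w_undir : undirected w.

Lemma lap_entryC a b : lap_entry w a b = lap_entry w b a.
Proof.
rewrite /lap_entry w_undir; case: (eqVneq a b) => [->//|ab].
by rewrite !mulr0.
Qed.

Lemma sum_lap_entry_row a : \sum_b lap_entry w a b = 0.
Proof.
rewrite -[RHS](sum_lap_entry_col a).
by apply: eq_bigr => b _; rewrite lap_entryC.
Qed.

Lemma mlap_cst c a : mlap w (fun=> c) a = 0.
Proof. by rewrite /mlap -mulr_suml sum_lap_entry_row mul0r. Qed.

Lemma inner_mlapC A B : inner A (mlap w B) = inner B (mlap w A).
Proof.
rewrite /inner /mlap.
under eq_bigr do rewrite mulr_sumr.
under [RHS]eq_bigr do rewrite mulr_sumr.
rewrite exchange_big /=; apply: eq_bigr => b _; apply: eq_bigr => a _.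
by rewrite lap_entryC; ring.
Qed.

Lemma mlapE T a : mlap w T a = \sum_b w a b * (T a - T b).
Proof.
rewrite /mlap /lap_entry.
under eq_bigr do rewrite mulrBl.
under [RHS]eq_bigr do rewrite mulrBr.
rewrite !sumrB; congr (_ - _).
rewrite (bigD1 a) //= eqxx mulr1 [X in _ + X]big1 ?addr0; last first.
  by move=> b; rewrite eq_sym => /negbTE ->; rewrite mulr0 mul0r.
rewrite -mulr_suml; congr (_ * _).
by apply: eq_bigr => b _; rewrite w_undir.
Qed.

Lemma inner_mlap_dirichlet T :
  2 * inner T (mlap w T) = \sum_a \sum_b w a b * (T a - T b) ^+ 2.
Proof.
have E : inner T (mlap w T) = \sum_a \sum_b w a b * (T a * (T a - T b)).
  rewrite /inner; apply: eq_bigr => a _; rewrite mlapE mulr_sumr.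
  by apply: eq_bigr => b _; ring.
have E' : inner T (mlap w T) = \sum_a \sum_b w a b * (T b * (T b - T a)).
  rewrite E exchange_big /=; apply: eq_bigr => a _; apply: eq_bigr => b _.
  by rewrite w_undir.
rewrite mulr2n mulrDl mul1r {1}E E' -big_split /=.
apply: eq_bigr => a _; rewrite -big_split /=; apply: eq_bigr => b _; ring.
Qed.

Hypothesis w_ge0 : forall a b, 0 <= w a b.

Lemma inner_mlap_ge0 T : 0 <= inner T (mlap w T).
Proof.
have : 0 <= 2 * inner T (mlap w T).
  rewrite inner_mlap_dirichlet.
  by do 2 (apply: sumr_ge0 => ? _); rewrite mulr_ge0 ?sqr_ge0.
by rewrite pmulr_rge0.
Qed.

Hypothesis w_conn : connected_net w.

Lemma mlap_eq0_cst T : (forall a, mlap w T a = 0) -> forall a b, T a = T b.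
Proof.
move=> LT0.
have /eqP S0 : \sum_a \sum_b w a b * (T a - T b) ^+ 2 == 0.
  by rewrite -inner_mlap_dirichlet /inner big1 ?mulr0 // => a _; rewrite LT0 mulr0.
have T_edge a b : 0 < w a b -> T a = T b.
  move=> wab; move/eqP: S0; rewrite psumr_eq0 => [/allP/(_ a (mem_index_enum a))|c _].
    rewrite psumr_eq0 => [/allP/(_ b (mem_index_enum b))|d _]; last first.
      by rewrite mulr_ge0 ?sqr_ge0.
    by rewrite /= mulf_eq0 (gt_eqF wab) sqrf_eq0 subr_eq0 => /eqP.
  by apply: sumr_ge0 => d _; rewrite mulr_ge0 ?sqr_ge0.
move=> a b.
have T_closed : fingraph.closed [rel x y : node N | 0 < w x y] [pred x | T x == T a].
  by move=> x y /T_edge Txy; rewrite !inE Txy.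
have := closed_connect T_closed (w_conn a b).
by rewrite !inE eqxx => /esym/eqP.
Qed.

Local Notation n := #|{: node N}|.
Local Notation node_of := (@enum_val (node N) (mem {: node N})).

Local Notation ones_row := (const_mx 1 : 'rV[R]_n).
Local Notation ones_col := (const_mx 1 : 'cV[R]_n).

Definition lapmx : 'M[R]_n := \matrix_(i, j) lap_entry w (node_of i) (node_of j).

Lemma sum_nodeE (F : node N -> R) : \sum_a F a = \sum_(i < n) F (node_of i).
Proof.
by rewrite (reindex node_of) //; exists enum_rank => i _; [exact: enum_valK | exact: enum_rankK].
Qed.

Lemma mul_row_lapmx (r : 'rV[R]_n) a :
  (r *m lapmx) 0 (enum_rank a) = mlap w (fun b => r 0 (enum_rank b)) a.
Proof.
rewrite mxE /mlap sum_nodeE; apply: eq_bigr => k _.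
by rewrite mxE enum_valK enum_rankK lap_entryC mulrC.
Qed.

Lemma kermx_lapmx : (kermx lapmx <= ones_row)%MS.
Proof.
apply/row_subP => i; set r := row i (kermx lapmx).
have rL0 : r *m lapmx = 0 by rewrite /r -row_mul mulmx_ker row0.
clearbody r.
have r_cst : forall a b, r 0 (enum_rank a) = r 0 (enum_rank b).
  by apply: mlap_eq0_cst => a; rewrite -mul_row_lapmx rL0 mxE.
have -> : r = r 0 i *: ones_row.
  apply/matrixP => x y; rewrite (ord1 x) !mxE mulr1.
  by have := r_cst (node_of y) (node_of i); rewrite !enum_valK.
exact: scalemx_sub (submx_refl _).
Qed.

Lemma lapmx_range : (kermx ones_col <= lapmx)%MS.
Proof.
have L1 : lapmx *m ones_col = 0.
  apply/matrixP => i j; rewrite !mxE -[RHS](sum_lap_entry_row (node_of i)) sum_nodeE.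
  by apply: eq_bigr => k _; rewrite !mxE mulr1.
have sub_ker : (lapmx <= kermx ones_col)%MS by apply/sub_kermxP.
(* ker L = span U gives rank L >= n - 1 = \rank (kermx ones_col). *)
suff rk : (\rank (kermx ones_col) <= \rank lapmx)%N.
  by have [_ <-] := mxrank_leqif_sup sub_ker; rewrite eqn_leq rk mxrankS.
rewrite mxrank_ker -mxrank_tr trmx_const leq_subLR.
rewrite -{1}(subnK (rank_leq_row lapmx)) leq_add2r -mxrank_ker.
exact: mxrankS kermx_lapmx.
Qed.

Lemma mlap_solvable (g : node N -> R) :
  \sum_a g a = 0 -> exists Lam, forall a, mlap w Lam a = g a.
Proof.
move=> g_sum0.
pose v : 'rV[R]_n := \row_j g (node_of j).
have v_ker : (v <= kermx ones_col)%MS.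
  apply/sub_kermxP/matrixP => i j; rewrite !mxE -[RHS]g_sum0 sum_nodeE.
  by apply: eq_bigr => k _; rewrite !mxE mulr1.
have v_range := mulmxKpV (submx_trans v_ker lapmx_range).
exists (fun b => (v *m pinvmx lapmx) 0 (enum_rank b)) => a.
by rewrite -mul_row_lapmx v_range mxE enum_rankK.
Qed.

End Laplacian.

Section Lagrangian.
Variables (R : realType) (M : nat) (N : 'I_M -> nat).
Variables (w : node N -> node N -> R) (f : node N -> R -> R).

Lemma aug_lagDr Y Lam D :
  aug_lag w f Y (fun a => Lam a + D a) = aug_lag w f Y Lam + inner D (mlap w Y).
Proof.
rewrite /aug_lag {1}/inner; under eq_bigr do rewrite mulrDl.
by rewrite big_split /= -/(inner Lam (mlap w Y)) -/(inner D (mlap w Y)); ring.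
Qed.

Lemma aug_lag_shift Y Lam gamma :
  aug_lag w f Y (fun a => Lam a + gamma * all_ones R a) = aug_lag w f Y Lam.
Proof.
rewrite aug_lagDr /inner; under eq_bigr do rewrite /all_ones mulr1.
by rewrite -mulr_sumr sum_mlap mulr0 addr0.
Qed.

Lemma aug_lag_ker Y Lam : (forall a, mlap w Y a = 0) -> aug_lag w f Y Lam = ftilde f Y.
Proof.
by move=> LY0; rewrite /aug_lag /inner !big1 ?mulr0 ?addr0 // => a _; rewrite LY0 mulr0.
Qed.

Lemma saddle_shift Y Lam gamma :
  saddle w f Y Lam -> saddle w f Y (fun a => Lam a + gamma * all_ones R a).
Proof. by move=> [Lam_max Y_min]; split => *; rewrite !aug_lag_shift. Qed.

Lemma saddle_mlap_eq0 Y Lam : saddle w f Y Lam -> forall a, mlap w Y a = 0.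
Proof.
move=> [Lam_max _] a.
have := Lam_max (fun b => Lam b + mlap w Y b); rewrite aug_lagDr gerDl /inner => sq_le0.
have /eqP : \sum_b mlap w Y b * mlap w Y b = 0.
  by apply/eqP; rewrite eq_le sq_le0 sumr_ge0 // => b _; rewrite -expr2 sqr_ge0.
rewrite psumr_eq0 => [/allP/(_ a (mem_index_enum a))|b _]; last by rewrite -expr2 sqr_ge0.
by rewrite mulf_eq0 orbb => /eqP.
Qed.

Hypotheses (w_undir : undirected w) (w_ge0 : forall a b, 0 <= w a b).
Hypothesis w_conn : connected_net w.

Lemma saddle_consensus Y Lam : saddle w f Y Lam ->
  exists xs, Y = (fun a => xs * all_ones R a) /\
    forall x, \sum_a f a xs <= \sum_a f a x.
Proof.
move=> s; have LY0 := saddle_mlap_eq0 s.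
have Y_cst := mlap_eq0_cst w_undir w_ge0 w_conn LY0.
pose xs := if [pick a : node N] is Some a0 then Y a0 else 0.
have Y_xs : Y = (fun a => xs * all_ones R a).
  apply: funext => b; rewrite /all_ones mulr1 /xs.
  by case: pickP => [a0 _|/(_ b) //]; exact: Y_cst.
exists xs; split => // x.
have := s.2 (fun=> x); rewrite !aug_lag_ker //; last exact: mlap_cst w_undir x.
by rewrite /ftilde Y_xs /all_ones; under eq_bigr do rewrite mulr1.
Qed.

Hypotheses (f_cvx : forall a, convex_fun (f a))
  (f_der : forall a x, derivable (f a) x 1).

Lemma saddle_cst_stationary x0 Lam :
  (forall a, mlap w Lam a + derive1 (f a) x0 = 0) -> saddle w f (fun=> x0) Lam.
Proof.
move=> Lam_grad; pose g a := derive1 (f a) x0.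
have L_x0 a : mlap w (fun=> x0) a = 0 := mlap_cst w_undir x0 a.
have g_eq a : g a = - mlap w Lam a by apply/eqP; rewrite -addr_eq0 addrC Lam_grad.
have g_sum0 : \sum_a g a = 0.
  by under eq_bigr do rewrite g_eq; rewrite sumrN sum_mlap oppr0.
split => [Lam'|Y']; first by rewrite !aug_lag_ker.
rewrite aug_lag_ker // /aug_lag.
have tangent : ftilde f (fun=> x0) + \sum_a g a * Y' a <= ftilde f Y'.
  have -> : \sum_a g a * Y' a = \sum_a g a * (Y' a - x0).
    under [RHS]eq_bigr do rewrite mulrBr.
    by rewrite sumrB -mulr_suml g_sum0 mul0r subr0.
  by rewrite /ftilde -big_split /=; apply: ler_sum => a _; exact: convex_fun_tangent.
have lin : inner Lam (mlap w Y') = - \sum_a g a * Y' a.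
  rewrite (inner_mlapC w_undir) /inner -sumrN; apply: eq_bigr => a _.
  by rewrite g_eq; ring.
have := inner_mlap_ge0 w_undir w_ge0 Y'; lra.
Qed.

Lemma saddle_exists x0 : (forall x, \sum_a f a x0 <= \sum_a f a x) ->
  exists Y Lam, saddle w f Y Lam /\ forall a, mlap w Lam a + grad_ftilde f Y a = 0.
Proof.
move=> x0_min.
have [Lam Lam_grad] : exists Lam, forall a, mlap w Lam a = - derive1 (f a) x0.
  by apply: mlap_solvable => //; rewrite sumrN (sum_derive1_at_min f_der x0_min) oppr0.
have Lam_grad0 a : mlap w Lam a + derive1 (f a) x0 = 0 by rewrite Lam_grad addNr.
by exists (fun=> x0), Lam; split; [exact: saddle_cst_stationary | exact: Lam_grad0].
Qed.

End Lagrangian.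

Theorem lemma1 (R : realType) (M : nat) (N : 'I_M -> nat)
    (w : node N -> node N -> R) (f : node N -> R -> R)
    (w_ge0 : forall a b, 0 <= w a b)
    (w_undir : undirected w)
    (w_conn : connected_net w)
    (f_conv : forall a, convex_fun (f a))
    (f_smooth : forall a, diff_lipschitz_deriv (f a)) :
  (* (1) *)
  (forall (Y Lam : node N -> R), saddle w f Y Lam ->
     forall gamma : R, saddle w f Y (fun a => Lam a + gamma * all_ones R a)) /\
  (* (2) *)
  (forall (Y Lam : node N -> R), saddle w f Y Lam ->
     exists xs : R, Y = (fun a => xs * all_ones R a) /\
       forall x : R, \sum_(a : node N) f a xs <= \sum_(a : node N) f a x) /\
  (* (3), under the standing assumption that the primal problem has a solution *)
  ((exists x0 : R, forall x : R,
       \sum_(a : node N) f a x0 <= \sum_(a : node N) f a x) ->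
   exists (Y Lam : node N -> R), saddle w f Y Lam /\
     forall a, mlap w Lam a + grad_ftilde f Y a = 0).
Proof.
have f_der a x : derivable (f a) x 1 := (f_smooth a).1 x.
split; first by move=> Y Lam s gamma; exact: saddle_shift.
split; first by move=> Y Lam; exact: saddle_consensus.
by move=> [x0 x0_min]; exact: saddle_exists.
Qed.
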